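(* There is an absolute constant $K>0$ such that the following holds. Let $n,k,m$ be integers and $\delta$ a real number with $1\le m\le k\le n$ and $0<\delta<1$. Let \[ p=\min\Bigl\{\frac{1}{m}\cdot\log_2\frac{m}{\delta}\cdot\ln\frac{Kn}{m},\ \frac12\Bigr\}, \] and let $M$ be a random $m\times n$ matrix over $GF(2)$ whose entries are independent and each equals $1$ with probability $p$. Then for every random variable $X$ on $\{0,1\}^n$ of min-entropy at least $k$, independent of $M$, the statistical distance between $(M, MX)$ and $(M,U_m)$ is at most \[ \tfrac12\sqrt{\delta+K\cdot 2^{-k+m}}, \] where $U_m$ is uniform on $\{0,1\}^m$ and independent of $M$. (That is, $H(x)=Mx$ is a strong extractor family for min-entropy $k$ with this error.)
   Context: The min-entropy of a random variable $X$ is $\min_x \log_2(1/\Pr[X=x])$. The statistical distance between random variables $A,B$ on a finite set $\Omega$ is $\max_{T\subseteq\Omega}|\Pr[A\in T]-\Pr[B\in T]| = \frac12\sum_{\omega}|\Pr[A=\omega]-\Pr[B=\omega]|$. A strong extractor family for min-entropy $k$ with error $\varepsilon$ is a distribution $H$ on functions $\{0,1\}^n\to\{0,1\}^m$ such that for every $X$ of min-entropy at least $k$ (independent of $H$), $(H,H(X))$ and $(H,U_m)$ are within statistical distance $\varepsilon$. *)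

From Stdlib Require Import Reals.
From HB Require Import structures.
From mathcomp Require Import all_boot all_order all_algebra.
Set Implicit Arguments. Unset Strict Implicit. Unset Printing Implicit Defensive.
Local Open Scope R_scope.

Definition is_distr (T : finType) (P : T -> R) : Prop :=
  (forall x, (0 <= P x)) /\ \big[Rplus/0]_(x : T) P x = 1.

Definition log2 (x : R) : R := (ln x / ln 2).

(* min_x log2 (1/Pr[X=x]) >= k  (points of probability 0 contribute +infinity) *)
Definition min_entropy_ge (T : finType) (P : T -> R) (k : R) : Prop :=
  forall x, (0 < P x) -> (k <= log2 (/ P x)).

Definition stat_dist (T : finType) (P Q : T -> R) : R :=
  (/2 * \big[Rplus/0]_(w : T) Rabs (P w - Q w)).

Definition bern_mx_law (m n : nat) (p : R) (A : 'M['F_2]_(m, n)) : R :=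
  \big[Rmult/1]_(ij : 'I_m * 'I_n)
    (if A ij.1 ij.2 == GRing.one _ then p else 1 - p).
Arguments bern_mx_law : clear implicits.

Definition law_M_MX (m n : nat) (PM : 'M['F_2]_(m, n) -> R)
  (PX : 'cV['F_2]_n -> R) (w : 'M['F_2]_(m, n) * 'cV['F_2]_m) : R :=
  (PM w.1 * \big[Rplus/0]_(x : 'cV['F_2]_n | mulmx w.1 x == w.2) PX x).

Definition law_M_U (m n : nat) (PM : 'M['F_2]_(m, n) -> R)
  (w : 'M['F_2]_(m, n) * 'cV['F_2]_m) : R :=
  (PM w.1 * / pow 2 m).
Arguments law_M_U : clear implicits.

Definition bias (K : R) (n m : nat) (delta : R) : R :=
  Rmin (/ INR m * log2 (INR m / delta) * ln (K * INR n / INR m)) (/2).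

(* Let M be an m x n matrix over GF(2) whose entries are independent Bernoulli(p)
   bits, put u = 1 - 2p, and let X be a source with Pr[X = x] <= eps = 2^-k.
   The proof has four steps.
   1. Fourier analysis over GF(2): a vector v of Hamming weight w lies in the kernel
      of M with probability ((1 + u^w) / 2)^m ([prob_ker]).
   2. Collision bound: two applications of Cauchy-Schwarz bound the statistical
      distance by 1/2 sqrt(sum_(x,x') P(x) P(x') (1 + u^wt(x - x'))^m - 1)
      ([sd_collision_bound]).
   3. Combinatorial estimate: expanding (1 + y)^m over the subsets T of [m] and
      splitting at a size threshold j0 for T and a weight threshold W for x - x',
      the inner sum is at most
        eps * #{wt < W} * #{|T| < j0} + (1 + u^W)^m + eps 2^m (1 + u^j0)^n
      ([inner_sum_bound], [sd_threshold_bound]).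
   4. Parameters: with K = exp 10^12, taking W ~ ln(2m/delta) / 2p and
      j0 ~ ln n / 2p bounds the three terms by eps 2^m, 1 + delta and 3 eps 2^m
      when m >= 2 and p < 1/2 ([sparse_regime]); the degenerate cases m = 1
      and p = 1/2 are handled directly, and [theorem1] combines the three cases. *)
From Stdlib Require Import Reals Lra ZArith.
From HB Require Import structures.
From mathcomp Require Import all_boot all_order all_algebra.
Set Implicit Arguments. Unset Strict Implicit. Unset Printing Implicit Defensive.
Local Open Scope R_scope.

(* Addition and multiplication of reals as monoid laws, so that the generic
   bigop theory (splitting, exchange, distributivity) applies to the sums and
   products. *)
HB.instance Definition _ := Monoid.isComLaw.Build R 0 Rplus
  (fun a b c => esym (Rplus_assoc a b c)) Rplus_comm Rplus_0_l.
HB.instance Definition _ := Monoid.isComLaw.Build R 1 Rmult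
  (fun a b c => esym (Rmult_assoc a b c)) Rmult_comm Rmult_1_l.
HB.instance Definition _ := Monoid.isMulLaw.Build R 0 Rmult Rmult_0_l Rmult_0_r.
HB.instance Definition _ := Monoid.isAddLaw.Build R Rmult Rplus
  Rmult_plus_distr_r Rmult_plus_distr_l.

Lemma sumR_le (I : finType) (P : pred I) (F G : I -> R) :
  (forall i, P i -> F i <= G i) ->
  \big[Rplus/0]_(i | P i) F i <= \big[Rplus/0]_(i | P i) G i.
Proof. by move=> FG; apply: (big_ind2 (fun a b => a <= b)) => //; [lra | move=> *; lra]. Qed.

Lemma sumR_ge0 (I : finType) (P : pred I) (F : I -> R) :
  (forall i, P i -> 0 <= F i) -> 0 <= \big[Rplus/0]_(i | P i) F i.
Proof. by move=> F0; apply: (big_ind (fun a => 0 <= a)) => //; [lra | move=> *; lra]. Qed.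

Lemma prodR_ge0 (I : finType) (P : pred I) (F : I -> R) :
  (forall i, P i -> 0 <= F i) -> 0 <= \big[Rmult/1]_(i | P i) F i.
Proof. by move=> F0; apply: (big_ind (fun a => 0 <= a)) => //; [lra | move=> *; nra]. Qed.

Lemma sumR_sub (I : finType) (P : pred I) (F : I -> R) :
  (forall i, 0 <= F i) -> \big[Rplus/0]_(i | P i) F i <= \big[Rplus/0]_i F i.
Proof.
move=> F0; rewrite big_mkcond; apply: sumR_le => i _.
by case: (P i) => /=; [lra | exact: F0].
Qed.

Lemma sumR_const (I : finType) (c : R) : \big[Rplus/0]_(i : I) c = INR #|I| * c.
Proof.
rewrite big_const; elim: #|I| => [|n IH]; first by rewrite /=; lra.
by rewrite iterS IH S_INR; lra.
Qed.

Lemma prodR_const (I : finType) (A : {pred I}) (c : R) :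
  \big[Rmult/1]_(i in A) c = c ^ #|A|.
Proof. by rewrite big_const; elim: #|A| => [|n IH] //=; rewrite IH. Qed.

Lemma sumR_minus (I : finType) (P : pred I) (F G : I -> R) :
  \big[Rplus/0]_(i | P i) (F i - G i) =
  \big[Rplus/0]_(i | P i) F i - \big[Rplus/0]_(i | P i) G i.
Proof.
rewrite big_split /=; congr (_ + _).
by symmetry; apply: (big_morph Ropp); [move=> *; lra | lra].
Qed.

Lemma sumR_mull (I : finType) (P : pred I) (F : I -> R) a :
  \big[Rplus/0]_(i | P i) (a * F i) = a * \big[Rplus/0]_(i | P i) F i.
Proof. by rewrite big_distrr. Qed.

Lemma sumR_mulr (I : finType) (P : pred I) (F : I -> R) a :
  \big[Rplus/0]_(i | P i) (F i * a) = (\big[Rplus/0]_(i | P i) F i) * a.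
Proof. by rewrite big_distrl. Qed.

Lemma sum_mul_sum (I J : finType) (F : I -> R) (G : J -> R) :
  \big[Rplus/0]_i \big[Rplus/0]_j (F i * G j) =
  (\big[Rplus/0]_i F i) * (\big[Rplus/0]_j G j).
Proof. by rewrite -sumR_mulr; apply: eq_bigr => i _; rewrite sumR_mull. Qed.

Definition indR (b : bool) : R := if b then 1 else 0.

Lemma indR_ge0 b : 0 <= indR b.
Proof. by rewrite /indR; case: b; lra. Qed.

Lemma sum_cond_ind (I : finType) (P : pred I) (F : I -> R) :
  \big[Rplus/0]_(i | P i) F i = \big[Rplus/0]_i (indR (P i) * F i).
Proof. by rewrite big_mkcond; apply: eq_bigr => i _; rewrite /indR; case: (P i) => /=; lra. Qed.

Lemma sum_ind_eq (I : finType) (a : I) (F : I -> R) :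
  \big[Rplus/0]_i (indR (a == i) * F i) = F a.
Proof.
rewrite (bigD1 a) //= big1 /indR ?eqxx; first lra.
by move=> i ia; rewrite eq_sym (negbTE ia); lra.
Qed.

Lemma prod_ind (I : finType) (c : pred I) :
  \big[Rmult/1]_(i : I) indR (c i) = indR [forall i, c i].
Proof.
have [/forallP call | /forallPn [i ci]] := boolP [forall i, c i].
  by rewrite big1 // => i _; rewrite call.
by rewrite (bigD1 i) //= /indR (negbTE ci) Rmult_0_l.
Qed.

(* Weighted Cauchy-Schwarz: (E_w a)^2 <= (sum w) * E_w a^2, proved from the
   nonnegativity of sum_(i,j) w_i w_j (a_i - a_j)^2. *)
Lemma cauchy_schwarz (I : finType) (w a : I -> R) :
  (forall i, 0 <= w i) ->
  (\big[Rplus/0]_i (w i * a i)) ^ 2 <=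
  (\big[Rplus/0]_i w i) * (\big[Rplus/0]_i (w i * a i ^ 2)).
Proof.
move=> w0.
have sq0 : 0 <= \big[Rplus/0]_i \big[Rplus/0]_j (w i * w j * (a i - a j) ^ 2).
  apply: sumR_ge0 => i _; apply: sumR_ge0 => j _.
  by apply: Rmult_le_pos; [apply: Rmult_le_pos | apply: pow2_ge_0].
have expand i j : w i * w j * (a i - a j) ^ 2 =
   (w i * a i ^ 2) * w j + w i * (w j * a j ^ 2) - 2 * ((w i * a i) * (w j * a j)).
  by ring.
suff sq_eq : \big[Rplus/0]_i \big[Rplus/0]_j (w i * w j * (a i - a j) ^ 2)
  = 2 * ((\big[Rplus/0]_i w i) * (\big[Rplus/0]_i (w i * a i ^ 2))
        - (\big[Rplus/0]_i (w i * a i)) ^ 2) by rewrite sq_eq in sq0; lra.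
under eq_bigr => i _ do under eq_bigr => j _ do rewrite expand.
under eq_bigr => i _ do rewrite sumR_minus big_split /=.
rewrite sumR_minus big_split /= !sum_mul_sum.
under [X in _ - X = _]eq_bigr => i _ do rewrite sumR_mull.
by rewrite sumR_mull sum_mul_sum; ring.
Qed.

(* Subsets of I, encoded as boolean functions, and their sizes. *)
Definition card_true (I : finType) (T : {ffun I -> bool}) := #|[pred i | T i]|.

Lemma prodR_if (I : finType) (c : pred I) (y : R) :
  \big[Rmult/1]_(i : I) (if c i then y else 1) = y ^ #|[pred i | c i]|.
Proof. by rewrite -big_mkcond (prodR_const [pred i | c i]). Qed.

Lemma subset_sum_pow (I : finType) (y : R) :
  \big[Rplus/0]_(T : {ffun I -> bool}) y ^ card_true T = (1 + y) ^ #|I|.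
Proof.
rewrite -(prodR_const I).
have -> : 1 + y = \big[Rplus/0]_(b : bool) (if b then y else 1) by rewrite big_bool /=; lra.
by rewrite bigA_distr_bigA; apply: eq_bigr => T _; rewrite prodR_if.
Qed.

Lemma subset_sum_pow_ord (m : nat) (y : R) :
  (1 + y) ^ m = \big[Rplus/0]_(T : {ffun 'I_m -> bool}) y ^ card_true T.
Proof. by rewrite subset_sum_pow card_ord. Qed.

Lemma F2_cases (a : 'F_2) : a = 0%R \/ a = 1%R.
Proof. by case: a => [[|[|k]] Hk]; [left | right | by []]; apply: val_inj. Qed.

Definition wt n (v : 'cV['F_2]_n) := #|[pred j : 'I_n | v j ord0 != 0%R]|.

Lemma wt0 n : wt (0 : 'cV['F_2]_n)%R = 0%N.
Proof. by apply: eq_card0 => j; rewrite inE mxE eqxx. Qed.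

Lemma wt_sum n (y : R) : \big[Rplus/0]_(v : 'cV['F_2]_n) y ^ wt v = (1 + y) ^ n.
Proof.
rewrite -[in RHS](card_ord n) -subset_sum_pow.
pose col_of (T : {ffun 'I_n -> bool}) : 'cV['F_2]_n := (\col_j (if T j then 1 else 0))%R.
have col_bij : bijective col_of.
  exists (fun v : 'cV['F_2]_n => [ffun j => v j ord0 != 0%R]).
  - by move=> T; apply/ffunP => j; rewrite ffunE mxE; case: (T j).
  - move=> v; apply/matrixP => i j; rewrite mxE ffunE (ord1 j).
    by case: (F2_cases (v i ord0)) => ->.
rewrite (reindex col_of); last exact: onW_bij.
by apply: eq_bigr => T _; congr (_ ^ _); apply: eq_card => j; rewrite !inE mxE; case: (T j).
Qed.

Lemma sum_translate n (x : 'cV['F_2]_n) (G : 'cV['F_2]_n -> R) :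
  \big[Rplus/0]_x' G (x - x')%R = \big[Rplus/0]_v G v.
Proof.
have inj_sub : injective (fun x' : 'cV['F_2]_n => (x - x')%R).
  by move=> a b /= /GRing.addrI /GRing.oppr_inj.
by rewrite [RHS](reindex_inj inj_sub).
Qed.

Lemma card_cV m : #|{: 'cV['F_2]_m}| = (2 ^ m)%N.
Proof. by rewrite card_mx card_Fp // muln1. Qed.

Lemma INR_pow2 m : INR (2 ^ m)%N = 2 ^ m.
Proof. by elim: m => [|m IH] //; rewrite expnS mult_INR IH /=; lra. Qed.

Lemma sum_one_cV m : \big[Rplus/0]_(y : 'cV['F_2]_m) 1 = 2 ^ m.
Proof. by rewrite sumR_const card_cV INR_pow2 Rmult_1_r. Qed.

Lemma le_sqrt a b : 0 <= a -> a ^ 2 <= b -> a <= sqrt b.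
Proof. by move=> a0 ab; rewrite -(sqrt_pow2 a a0); apply: sqrt_le_1_alt. Qed.

Definition bern (p : R) (a : 'F_2) : R := if a == 1%R then p else 1 - p.
Definition chi (a : 'F_2) : R := if a == 0%R then 1 else -1.

Lemma chiD a b : chi (a + b)%R = chi a * chi b.
Proof. by case: (F2_cases a) => ->; case: (F2_cases b) => ->; rewrite /chi /=; lra. Qed.

Lemma chi_sum (I : finType) (F : I -> 'F_2) :
  chi (\sum_(i : I) F i)%R = \big[Rmult/1]_(i : I) chi (F i).
Proof. by apply: (big_morph chi chiD); rewrite /chi eqxx. Qed.

Lemma ind_chi (s : 'F_2) : indR (s == 0%R) = (1 + chi s) / 2.
Proof. by case: (F2_cases s) => ->; rewrite /indR /chi /=; field. Qed.

Lemma sum_bern p : \big[Rplus/0]_(a : 'F_2) bern p a = 1.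
Proof. by rewrite big_ord_recl big_ord1 /bern /=; lra. Qed.

Lemma sum_bern_chi p (x : 'F_2) :
  \big[Rplus/0]_(a : 'F_2) (bern p a * chi (a * x)%R) = if x == 0%R then 1 else 1 - 2 * p.
Proof. by case: (F2_cases x) => ->; rewrite big_ord_recl big_ord1 /bern /chi /=; lra. Qed.

Lemma row_orth_prob n (p : R) (v : 'cV['F_2]_n) :
  \big[Rplus/0]_(r : {ffun 'I_n -> 'F_2})
     (\big[Rmult/1]_j bern p (r j) * indR ((\sum_j r j * v j ord0)%R == 0%R))
  = (1 + (1 - 2 * p) ^ wt v) / 2.
Proof.
under eq_bigr => r _ do rewrite ind_chi chi_sum.
have split_r (r : {ffun 'I_n -> 'F_2}) :
   \big[Rmult/1]_j bern p (r j) * ((1 + \big[Rmult/1]_j chi (r j * v j ord0)%R) / 2)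
   = / 2 * (\big[Rmult/1]_j bern p (r j)
            + \big[Rmult/1]_j (bern p (r j) * chi (r j * v j ord0)%R)).
  by rewrite big_split /=; field.
under eq_bigr => r _ do rewrite split_r.
rewrite sumR_mull big_split /=.
rewrite -(bigA_distr_bigA (fun j a => bern p a)).
rewrite -(bigA_distr_bigA (fun j a => bern p a * chi (a * v j ord0)%R)).
under eq_bigr => j _ do rewrite sum_bern.
under [X in _ * (_ + X)]eq_bigr => j _ do rewrite sum_bern_chi.
rewrite (prodR_const 'I_n) pow1.
have -> : \big[Rmult/1]_j (if v j ord0 == 0%R then 1 else 1 - 2 * p) = (1 - 2 * p) ^ wt v.
  by rewrite -prodR_if; apply: eq_bigr => j _; case: (v j ord0 == 0%R).
field.
Qed.

Lemma mulmx_eq0 m n (M : 'M['F_2]_(m, n)) (v : 'cV['F_2]_n) :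
  (M *m v == 0)%R = [forall i, (\sum_j M i j * v j ord0 == 0)%R].
Proof.
apply/eqP/forallP => [Mv0 i | rows0].
  by have := congr1 (fun A : 'cV_m => A i ord0) Mv0; rewrite !mxE => ->.
by apply/matrixP => i j; rewrite (ord1 j) !mxE; apply/eqP/rows0.
Qed.

Lemma bern_mx_prod m n p (M : 'M['F_2]_(m, n)) :
  bern_mx_law m n p M = \big[Rmult/1]_i \big[Rmult/1]_j bern p (M i j).
Proof. by rewrite /bern_mx_law (pair_bigA _ (fun i j => bern p (M i j))). Qed.

(* Step 1: by independence of the rows,
   Pr[M v = 0] = ((1 + (1 - 2p)^wt(v)) / 2)^m. *)
Lemma prob_ker m n p (v : 'cV['F_2]_n) :
  \big[Rplus/0]_(M : 'M['F_2]_(m, n)) (bern_mx_law m n p M * indR (M *m v == 0)%R)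
  = ((1 + (1 - 2 * p) ^ wt v) / 2) ^ m.
Proof.
under eq_bigr => M _ do rewrite bern_mx_prod mulmx_eq0 -prod_ind -big_split /=.
pose mx_of (f : {ffun 'I_m -> {ffun 'I_n -> 'F_2}}) : 'M['F_2]_(m, n) :=
  (\matrix_(i, j) f i j)%R.
have mx_bij : bijective mx_of.
  exists (fun M : 'M['F_2]_(m, n) => [ffun i => [ffun j => M i j]]).
  - by move=> f; apply/ffunP => i; apply/ffunP => j; rewrite !ffunE mxE.
  - by move=> M; apply/matrixP => i j; rewrite mxE !ffunE.
rewrite (reindex mx_of); last exact: onW_bij.
pose row_term (r : {ffun 'I_n -> 'F_2}) :=
  \big[Rmult/1]_j bern p (r j) * indR ((\sum_j r j * v j ord0)%R == 0%R).
transitivity (\big[Rplus/0]_(f : {ffun 'I_m -> {ffun 'I_n -> 'F_2}})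
                \big[Rmult/1]_i row_term (f i)).
  apply: eq_bigr => f _; apply: eq_bigr => i _; rewrite /row_term /mx_of.
  under eq_bigr => j _ do rewrite mxE.
  by under [in X in indR X]eq_bigr => j _ do rewrite mxE.
rewrite -(bigA_distr_bigA (fun i r => row_term r)).
under eq_bigr => i _ do rewrite /row_term row_orth_prob.
by rewrite (prodR_const 'I_m) card_ord.
Qed.

Section CollisionBound.
Variables (m n : nat) (p : R) (PX : 'cV['F_2]_n -> R).
Hypotheses (p_ge0 : 0 <= p) (p_le_half : p <= / 2) (PX_distr : is_distr PX).

Let PM := bern_mx_law m n p.

Lemma PM_ge0 M : 0 <= PM M.
Proof.
rewrite /PM bern_mx_prod; apply: prodR_ge0 => i _; apply: prodR_ge0 => j _.
by rewrite /bern; case: (M i j == 1%R); lra.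
Qed.

Lemma PM_sum : \big[Rplus/0]_M PM M = 1.
Proof.
have := @prob_ker m n p 0%R; rewrite wt0 /=.
have -> : (1 + 1) / 2 = 1 by field.
by rewrite pow1 => <-; apply: eq_bigr => M _; rewrite mulmx0 eqxx /indR Rmult_1_r.
Qed.

Definition image_law (M : 'M['F_2]_(m, n)) (y : 'cV['F_2]_m) :=
  \big[Rplus/0]_(x | (M *m x)%R == y) PX x.

Lemma image_law_sum M : \big[Rplus/0]_y image_law M y = 1.
Proof.
rewrite /image_law; under eq_bigr => y _ do rewrite sum_cond_ind.
rewrite exchange_big; under eq_bigr => x _ do rewrite (sum_ind_eq _ (fun _ => PX x)).
exact: PX_distr.2.
Qed.

Lemma image_law_collision M : \big[Rplus/0]_y (image_law M y) ^ 2 =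
  \big[Rplus/0]_x \big[Rplus/0]_x' (PX x * PX x' * indR ((M *m (x - x'))%R == 0%R)).
Proof.
rewrite /image_law.
under eq_bigr => y _ do rewrite sum_cond_ind /= Rmult_1_r -sum_mul_sum.
rewrite exchange_big; apply: eq_bigr => x _.
rewrite exchange_big; apply: eq_bigr => x' _.
have reorder y : indR ((M *m x)%R == y) * PX x * (indR ((M *m x')%R == y) * PX x')
   = indR ((M *m x)%R == y) * (PX x * PX x' * indR ((M *m x')%R == y)).
  by ring.
under eq_bigr => y _ do rewrite reorder.
rewrite (sum_ind_eq _ (fun y => PX x * PX x' * indR ((M *m x')%R == y))).
by rewrite mulmxBr GRing.subr_eq0 eq_sym.
Qed.

Definition l2_dev (M : 'M['F_2]_(m, n)) :=
  2 ^ m * \big[Rplus/0]_y (image_law M y - / 2 ^ m) ^ 2.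

Lemma l2_dev_ge0 M : 0 <= l2_dev M.
Proof.
apply: Rmult_le_pos; first by apply: pow_le; lra.
by apply: sumR_ge0 => y _; apply: pow2_ge_0.
Qed.

Lemma l2_dev_collision M : l2_dev M = 2 ^ m * \big[Rplus/0]_y (image_law M y) ^ 2 - 1.
Proof.
have pow_nz : 2 ^ m <> 0 by apply: pow_nonzero; lra.
have expand y : (image_law M y - / 2 ^ m) ^ 2
   = (image_law M y) ^ 2 - (2 / 2 ^ m) * image_law M y + / 2 ^ m * / 2 ^ m * 1.
  by field.
rewrite /l2_dev; under eq_bigr => y _ do rewrite expand.
by rewrite big_split sumR_minus /= !sumR_mull image_law_sum sum_one_cV; field.
Qed.

(* Cauchy-Schwarz over y: the L1 distance is at most the root of l2_dev. *)
Lemma l1_le_l2 M : \big[Rplus/0]_y Rabs (image_law M y - / 2 ^ m) <= sqrt (l2_dev M).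
Proof.
have cs := @cauchy_schwarz _ (fun _ : 'cV['F_2]_m => 1)
             (fun y => Rabs (image_law M y - / 2 ^ m)) (fun _ => Rle_0_1).
rewrite sum_one_cV in cs.
apply: le_sqrt; first by apply: sumR_ge0 => y _; apply: Rabs_pos.
rewrite (eq_bigr (fun y => 1 * Rabs (image_law M y - / 2 ^ m))); last by move=> *; lra.
apply: Rle_trans cs _; apply: Req_le; congr (_ * _).
by apply: eq_bigr => y _; rewrite Rmult_1_l pow2_abs.
Qed.

(* Averaging the collision probability over M with step 1. *)
Lemma mean_l2_dev : \big[Rplus/0]_M (PM M * l2_dev M) =
  \big[Rplus/0]_x \big[Rplus/0]_x'
     (PX x * PX x' * (1 + (1 - 2 * p) ^ wt (x - x')%R) ^ m) - 1.
Proof.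
under eq_bigr => M _ do rewrite l2_dev_collision image_law_collision
                               Rmult_minus_distr_l Rmult_1_r.
rewrite sumR_minus PM_sum; congr (_ - 1).
have distribute M : PM M * (2 ^ m * \big[Rplus/0]_x \big[Rplus/0]_x'
     (PX x * PX x' * indR ((M *m (x - x'))%R == 0%R)))
   = \big[Rplus/0]_x \big[Rplus/0]_x' ((2 ^ m * PX x * PX x') *
       (PM M * indR ((M *m (x - x'))%R == 0%R))).
  rewrite -!sumR_mull; apply: eq_bigr => x _.
  by rewrite -!sumR_mull; apply: eq_bigr => x' _; ring.
under eq_bigr => M _ do rewrite distribute.
rewrite exchange_big; apply: eq_bigr => x _.
rewrite exchange_big; apply: eq_bigr => x' _.
rewrite sumR_mull prob_ker /Rdiv Rpow_mult_distr -Rinv_pow; last lra.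
by field; apply: pow_nonzero; lra.
Qed.

Lemma sd_collision_bound :
  stat_dist (law_M_MX PM PX) (law_M_U m n PM)
  <= / 2 * sqrt (\big[Rplus/0]_x \big[Rplus/0]_x'
        (PX x * PX x' * (1 + (1 - 2 * p) ^ wt (x - x')%R) ^ m) - 1).
Proof.
rewrite /stat_dist -mean_l2_dev; apply: Rmult_le_compat_l; first lra.
have -> : \big[Rplus/0]_(w : 'M['F_2]_(m, n) * 'cV['F_2]_m)
    Rabs (law_M_MX PM PX w - law_M_U m n PM w)
  = \big[Rplus/0]_M \big[Rplus/0]_y Rabs (PM M * image_law M y - PM M * / 2 ^ m).
  by rewrite pair_bigA.
apply: Rle_trans (_ : \big[Rplus/0]_M (PM M * sqrt (l2_dev M)) <= _).
  apply: sumR_le => M _.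
  under eq_bigr => y _ do rewrite -Rmult_minus_distr_l Rabs_mult (Rabs_pos_eq _ (PM_ge0 M)).
  by rewrite sumR_mull; apply: Rmult_le_compat_l; [exact: PM_ge0 | exact: l1_le_l2].
apply: le_sqrt.
  by apply: sumR_ge0 => M _; apply: Rmult_le_pos; [exact: PM_ge0 | exact: sqrt_pos].
have := @cauchy_schwarz _ PM (fun M => sqrt (l2_dev M)) PM_ge0.
rewrite PM_sum Rmult_1_l => cs; apply: Rle_trans cs _; apply: Req_le.
by apply: eq_bigr => M _; rewrite -Rsqr_pow2 Rsqr_sqrt //; exact: l2_dev_ge0.
Qed.

End CollisionBound.

Lemma pow_le1 (y : R) k : 0 <= y <= 1 -> y ^ k <= 1.
Proof. by move=> y01; rewrite -(pow1 k); apply: pow_incr; lra. Qed.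

Lemma pow_le_dec (y : R) a b : 0 <= y <= 1 -> (a <= b)%N -> y ^ b <= y ^ a.
Proof.
move=> y01 ab; rewrite -(subnKC ab) pow_add.
have := pow_le1 (b - a) y01; have : 0 <= y ^ a by apply: pow_le; lra.
by move=> *; nra.
Qed.

Lemma exp_le x y : x <= y -> exp x <= exp y.
Proof. by case/Rle_lt_or_eq_dec => [xy | ->]; [left; apply: exp_increasing | apply: Rle_refl]. Qed.

Lemma ln_le x y : 0 < x -> x <= y -> ln x <= ln y.
Proof. by move=> x0; case/Rle_lt_or_eq_dec => [xy | ->]; [left; apply: ln_increasing | apply: Rle_refl]. Qed.

Lemma exp_pow_n a k : exp a ^ k = exp (INR k * a).
Proof.
elim: k => [|k IH]; first by rewrite /= Rmult_0_l exp_0.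
have -> : exp a ^ k.+1 = exp a * exp a ^ k by [].
by rewrite IH -exp_plus S_INR; congr exp; ring.
Qed.

Lemma pow_as_exp (t : R) k : 0 < t -> t ^ k = exp (INR k * ln t).
Proof. by move=> t0; rewrite -exp_pow_n exp_ln. Qed.

Lemma ln_le_sub1 x : 0 < x -> ln x <= x - 1.
Proof. by move=> x0; have := exp_ineq1_le (ln x); rewrite exp_ln //; lra. Qed.

Lemma ln2_lt1 : ln 2 < 1.
Proof.
rewrite -[X in _ < X](ln_exp 1); apply: ln_increasing; first lra.
by have := exp_ineq1 1; lra.
Qed.

(* 1 + y <= exp y, raised to the k-th power. *)
Lemma one_plus_pow (y : R) k : 0 <= y -> (1 + y) ^ k <= exp (INR k * y).
Proof.
move=> y0; rewrite -exp_pow_n; apply: pow_incr; split; first lra.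
by have := exp_ineq1_le y; lra.
Qed.

Lemma pow_exp_bound (u s : R) k : 0 <= u -> u <= exp (- s) -> u ^ k <= exp (- (INR k * s)).
Proof.
move=> u0 us; apply: Rle_trans (_ : exp (- s) ^ k <= _); first by apply: pow_incr.
by rewrite exp_pow_n; apply: Req_le; congr exp; ring.
Qed.

(* exp (d/2) <= 1 + d on [0, 1], from exp (-d/2) >= 1 - d/2. *)
Lemma exp_half_le d : 0 <= d <= 1 -> exp (d / 2) <= 1 + d.
Proof.
move=> d01.
have lower := exp_ineq1_le (- (d / 2)).
have inv : exp (d / 2) * exp (- (d / 2)) = 1 by rewrite -exp_plus Rplus_opp_r exp_0.
have pos := exp_pos (d / 2).
have : exp (d / 2) * (1 - d / 2) <= 1 by rewrite -inv; apply: Rmult_le_compat_l; lra.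
by nra.
Qed.

Lemma ceil_nat (r : R) : 0 <= r -> exists k : nat, r <= INR k <= r + 1.
Proof.
move=> r0; have [up_gt up_le] := archimed r.
have up0 : Z.le 0 (up r) by apply: le_IZR; lra.
by exists (Z.to_nat (up r)); rewrite INR_IZR_INZ Z2Nat.id //; lra.
Qed.

Lemma minent_bound n (PX : 'cV['F_2]_n -> R) k :
  is_distr PX -> min_entropy_ge PX (INR k) -> forall x, PX x <= / 2 ^ k.
Proof.
move=> PX_distr PX_ent x.
case: (Rle_lt_or_eq_dec _ _ (PX_distr.1 x)) => [Px0 | <-]; last first.
  by apply: Rlt_le; apply: Rinv_0_lt_compat; apply: pow_lt; lra.
have ln2_pos : 0 < ln 2 by have := ln_lt_2; lra.
have k_le : INR k * ln 2 <= ln (/ PX x).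
  have := Rmult_le_compat_r (ln 2) _ _ (Rlt_le _ _ ln2_pos) (PX_ent x Px0).
  by rewrite /log2 /Rdiv Rmult_assoc Rinv_l; lra.
have pow_le_inv : 2 ^ k <= / PX x.
  rewrite (pow_as_exp k (Rlt_0_2)) -(exp_ln (/ PX x)); last exact: Rinv_0_lt_compat.
  exact: exp_le.
rewrite -(Rinv_inv (PX x)); apply: Rinv_le_contravar => //; apply: pow_lt; lra.
Qed.

Definition light_count n W := \big[Rplus/0]_(v : 'cV['F_2]_n) indR (wt v < W)%N.

Definition small_count m j0 :=
  \big[Rplus/0]_(T : {ffun 'I_m -> bool}) indR (card_true T < j0)%N.

Section ThresholdBound.
Variables (m n : nat) (PX : 'cV['F_2]_n -> R) (eps : R).
Hypotheses (PX_distr : is_distr PX) (PX_le : forall x, PX x <= eps).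

(* Splitting x' by the weight of x - x': light differences cost their mass,
   heavy ones cost y^W. *)
Lemma weighted_sum_split (x : 'cV['F_2]_n) (y : R) W : 0 <= y <= 1 ->
  \big[Rplus/0]_x' (PX x' * y ^ wt (x - x')%R) <= eps * light_count n W + y ^ W.
Proof.
move=> y01.
apply: Rle_trans (_ : \big[Rplus/0]_x'
    (eps * indR (wt (x - x')%R < W)%N + y ^ W * PX x') <= _).
  apply: sumR_le => x' _.
  have Px0 := PX_distr.1 x'; have Pxe := PX_le x'.
  have yW0 : 0 <= y ^ W by apply: pow_le; lra.
  rewrite /indR; case: ltnP => [light | heavy].
  - have := pow_le1 (wt (x - x')%R) y01.
    have : 0 <= y ^ wt (x - x')%R by apply: pow_le; lra.
    by move=> *; nra.
  - rewrite Rmult_0_r Rplus_0_l (Rmult_comm (y ^ W)); apply: Rmult_le_compat_l => //.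
    exact: pow_le_dec.
rewrite big_split !sumR_mull PX_distr.2 /light_count.
by rewrite (sum_translate x (fun v => indR (wt v < W)%N)) Rmult_1_r; apply: Rle_refl.
Qed.

(* Using only the point-mass bound, with the weight enumerator. *)
Lemma weighted_sum_bound (x : 'cV['F_2]_n) (y : R) : 0 <= y ->
  \big[Rplus/0]_x' (PX x' * y ^ wt (x - x')%R) <= eps * (1 + y) ^ n.
Proof.
move=> y0; rewrite -wt_sum -(sum_translate x (fun v => y ^ wt v)) -sumR_mull.
by apply: sumR_le => x' _; apply: Rmult_le_compat_r; [apply: pow_le | apply: PX_le].
Qed.

(* Step 3: expand (1 + y)^m over subsets T of [m]; small T are handled by the
   weight split, large T by the point-mass bound. *)
Lemma inner_sum_bound (u : R) (x : 'cV['F_2]_n) W j0 : 0 <= u <= 1 ->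
  \big[Rplus/0]_(x' : 'cV['F_2]_n) (PX x' * (1 + u ^ wt (x - x')%R) ^ m)
  <= eps * light_count n W * small_count m j0
     + \big[Rplus/0]_(T : {ffun 'I_m -> bool} | (card_true T < j0)%N) (u ^ W) ^ card_true T
     + eps * \big[Rplus/0]_(T : {ffun 'I_m -> bool} | ~~ (card_true T < j0)%N)
               (1 + u ^ card_true T) ^ n.
Proof.
move=> u01.
under eq_bigr => x' _ do rewrite subset_sum_pow_ord -sumR_mull.
rewrite exchange_big.
have swap_pow (T : {ffun 'I_m -> bool}) x' :
   PX x' * (u ^ wt (x - x')%R) ^ card_true T = PX x' * (u ^ card_true T) ^ wt (x - x')%R.
  by rewrite -!pow_mult Nat.mul_comm.
under eq_bigr => T _ do under eq_bigr => x' _ do rewrite swap_pow.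
have uT01 (T : {ffun 'I_m -> bool}) : 0 <= u ^ card_true T <= 1.
  by split; [apply: pow_le; lra | apply: pow_le1].
rewrite (bigID (fun T : {ffun 'I_m -> bool} => (card_true T < j0)%N)) /=.
apply: Rplus_le_compat.
  apply: Rle_trans (_ : \big[Rplus/0]_(T : {ffun 'I_m -> bool} | (card_true T < j0)%N)
      (eps * light_count n W + (u ^ W) ^ card_true T) <= _).
    apply: sumR_le => T _; rewrite -!pow_mult Nat.mul_comm pow_mult.
    exact: weighted_sum_split.
  rewrite big_split /=; apply: Rplus_le_compat_r; apply: Req_le.
  by rewrite sum_cond_ind sumR_mulr Rmult_comm.
rewrite -sumR_mull; apply: sumR_le => T _.
exact: weighted_sum_bound (proj1 (uT01 T)).
Qed.
End ThresholdBound.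

Definition threshold_bound m n (u eps : R) W j0 :=
  eps * light_count n W * small_count m j0
  + \big[Rplus/0]_(T : {ffun 'I_m -> bool} | (card_true T < j0)%N) (u ^ W) ^ card_true T
  + eps * \big[Rplus/0]_(T : {ffun 'I_m -> bool} | ~~ (card_true T < j0)%N)
            (1 + u ^ card_true T) ^ n.

Lemma sd_threshold_bound m n k (p : R) (PX : 'cV['F_2]_n -> R) W j0 :
  0 <= p <= / 2 -> is_distr PX -> min_entropy_ge PX (INR k) ->
  stat_dist (law_M_MX (bern_mx_law m n p) PX) (law_M_U m n (bern_mx_law m n p))
  <= / 2 * sqrt (threshold_bound m n (1 - 2 * p) (/ 2 ^ k) W j0 - 1).
Proof.
move=> [p0 p_half] PX_distr PX_ent.
apply: Rle_trans (@sd_collision_bound m n p PX p0 p_half PX_distr) _.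
apply: Rmult_le_compat_l; first lra.
apply: sqrt_le_1_alt; apply: Rplus_le_compat_r.
apply: Rle_trans (_ : \big[Rplus/0]_x
    (PX x * threshold_bound m n (1 - 2 * p) (/ 2 ^ k) W j0) <= _); last first.
  by rewrite sumR_mulr PX_distr.2 Rmult_1_l; apply: Rle_refl.
apply: sumR_le => x _; under eq_bigr => x' _ do rewrite Rmult_assoc.
rewrite sumR_mull; apply: Rmult_le_compat_l; first exact: PX_distr.1.
apply: (inner_sum_bound m PX_distr (minent_bound PX_distr PX_ent)); lra.
Qed.

(* Counting estimates: Chernoff-style bounds on light_count and small_count
   by evaluating the weight enumerators at t <= 1. *)
Lemma light_count_pow n W (t : R) : 0 <= t <= 1 -> light_count n W * t ^ W <= (1 + t) ^ n.
Proof.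
move=> t01; rewrite -wt_sum /light_count -sumR_mulr; apply: sumR_le => v _.
rewrite /indR; case: ltnP => [light | heavy].
- by rewrite Rmult_1_l; apply: pow_le_dec => //; apply: ltnW.
- by rewrite Rmult_0_l; apply: pow_le; lra.
Qed.

Lemma small_count_pow m j0 (t : R) : 0 <= t <= 1 -> small_count m j0 * t ^ j0 <= (1 + t) ^ m.
Proof.
move=> t01; rewrite subset_sum_pow_ord /small_count -sumR_mulr; apply: sumR_le => T _.
rewrite /indR; case: ltnP => [small | large].
- by rewrite Rmult_1_l; apply: pow_le_dec => //; apply: ltnW.
- by rewrite Rmult_0_l; apply: pow_le; lra.
Qed.

Lemma light_count_ge0 n W : 0 <= light_count n W.
Proof. by apply: sumR_ge0 => v _; apply: indR_ge0. Qed.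

Lemma small_count_ge0 m j0 : 0 <= small_count m j0.
Proof. by apply: sumR_ge0 => T _; apply: indR_ge0. Qed.

(* Only the zero vector has weight 0. *)
Lemma light_count_1 n : light_count n 1 <= 1.
Proof.
rewrite -(pow1 n) -(Rplus_0_r 1) -wt_sum /light_count; apply: sumR_le => v _.
rewrite /indR; case: ltnP => [light | heavy].
- have -> : wt v = 0%N by move: light; case: (wt v).
  by rewrite /=; lra.
- by case: (wt v) heavy => //= k _; lra.
Qed.

Lemma small_count_le m j0 : small_count m j0 <= 2 ^ m.
Proof. by have := @small_count_pow m j0 1; rewrite pow1 Rmult_1_r; apply; lra. Qed.

Lemma small_subsets_sum m (y : R) j0 : 0 <= y ->
  \big[Rplus/0]_(T : {ffun 'I_m -> bool} | (card_true T < j0)%N) y ^ card_true T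
  <= (1 + y) ^ m.
Proof. by move=> y0; rewrite subset_sum_pow_ord; apply: sumR_sub => T; apply: pow_le. Qed.

Lemma large_subsets_sum m n (u : R) j0 : 0 <= u <= 1 ->
  \big[Rplus/0]_(T : {ffun 'I_m -> bool} | ~~ (card_true T < j0)%N) (1 + u ^ card_true T) ^ n
  <= 2 ^ m * (1 + u ^ j0) ^ n.
Proof.
move=> u01.
have uj0 : 0 <= (1 + u ^ j0) ^ n by apply: pow_le; have := pow_le u j0; lra.
apply: Rle_trans (_ : \big[Rplus/0]_(T : {ffun 'I_m -> bool} | ~~ (card_true T < j0)%N)
    (1 + u ^ j0) ^ n <= _).
  apply: sumR_le => T; rewrite -leqNgt => large.
  apply: pow_incr; split; first by have := pow_le u (card_true T); lra.
  by have := pow_le_dec u01 large; lra.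
apply: Rle_trans (sumR_sub _ (fun _ => uj0)) _.
by rewrite sumR_const card_ffun card_bool card_ord INR_pow2; apply: Rle_refl.
Qed.

Lemma large_subsets_empty m n (u : R) j0 : (m < j0)%N ->
  \big[Rplus/0]_(T : {ffun 'I_m -> bool} | ~~ (card_true T < j0)%N) (1 + u ^ card_true T) ^ n
  = 0.
Proof.
move=> m_lt; apply: big1 => T; rewrite -leqNgt => large; exfalso.
have : (card_true T <= m)%N by apply: leq_trans (max_card _) _; rewrite card_ord.
by move=> T_le; have := leq_trans large T_le; rewrite leqNgt m_lt.
Qed.

Lemma small_subsets_bound (m W : nat) (u s d : R) :
  (1 <= m)%N -> 0 <= u -> u <= exp (- s) -> 0 < d < 1 ->
  ln (2 * INR m / d) <= INR W * s -> (1 + u ^ W) ^ m <= 1 + d.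
Proof.
move=> m_ge1 u0 us d01 Ws.
have m1 : 1 <= INR m by apply: (le_INR 1); apply/leP.
have ratio_pos : 0 < 2 * INR m / d by apply: Rdiv_lt_0_compat; lra.
have uW : u ^ W <= d / (2 * INR m).
  apply: Rle_trans (pow_exp_bound W u0 us) _.
  apply: Rle_trans (_ : exp (- ln (2 * INR m / d)) <= _); first by apply: exp_le; lra.
  by rewrite exp_Ropp exp_ln //; apply: Req_le; field; lra.
apply: Rle_trans (one_plus_pow m (pow_le _ W u0)) _.
apply: Rle_trans (exp_half_le (conj (Rlt_le _ _ (proj1 d01)) (Rlt_le _ _ (proj2 d01)))).
apply: exp_le.
have -> : d / 2 = INR m * (d / (2 * INR m)) by field; lra.
by apply: Rmult_le_compat_l; lra.
Qed.

(* If u <= exp (-s) and j0 s >= ln n, then (1 + u^j0)^n <= e <= 3: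
   this controls the subsets of size at least j0. *)
Lemma large_subsets_bound (n j0 : nat) (u s : R) :
  (1 <= n)%N -> 0 <= u -> u <= exp (- s) ->
  ln (INR n) <= INR j0 * s -> (1 + u ^ j0) ^ n <= 3.
Proof.
move=> n_ge1 u0 us j0s.
have n1 : 1 <= INR n by apply: (le_INR 1); apply/leP.
have uj0 : u ^ j0 <= / INR n.
  apply: Rle_trans (pow_exp_bound j0 u0 us) _.
  rewrite -(exp_ln (/ INR n)); last by apply: Rinv_0_lt_compat; lra.
  by rewrite ln_Rinv; [apply: exp_le; lra | lra].
apply: Rle_trans (one_plus_pow n (pow_le _ j0 u0)) _.
apply: Rle_trans exp_le_3; apply: exp_le.
have : INR n * u ^ j0 <= INR n * / INR n by apply: Rmult_le_compat_l; lra.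
by rewrite Rinv_r; lra.
Qed.

(* Evaluating both enumerators at t and f:
   light_count n W * small_count m j0 <= 2^m as soon as
   n t + m f + W ln(1/t) + j0 ln(1/f) <= m ln 2. *)
Lemma count_product_bound m n W j0 (t f : R) : 0 < t <= 1 -> 0 < f <= 1 ->
  INR n * t + INR m * f + INR W * (- ln t) + INR j0 * (- ln f) <= INR m * ln 2 ->
  light_count n W * small_count m j0 <= 2 ^ m.
Proof.
move=> t01 f01 budget.
have light : light_count n W * t ^ W <= exp (INR n * t).
  apply: Rle_trans (@light_count_pow n W t (conj (Rlt_le _ _ (proj1 t01)) (proj2 t01))) _.
  by apply: one_plus_pow; lra.
have small : small_count m j0 * f ^ j0 <= exp (INR m * f).
  apply: Rle_trans (@small_count_pow m j0 f (conj (Rlt_le _ _ (proj1 f01)) (proj2 f01))) _.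
  by apply: one_plus_pow; lra.
have tf_pos : 0 < t ^ W * f ^ j0 by apply: Rmult_lt_0_compat; apply: pow_lt; lra.
apply: (Rmult_le_reg_r _ _ _ tf_pos).
apply: Rle_trans (_ : exp (INR n * t) * exp (INR m * f) <= _).
  rewrite (_ : light_count n W * small_count m j0 * (t ^ W * f ^ j0) =
             (light_count n W * t ^ W) * (small_count m j0 * f ^ j0)); last by ring.
  apply: Rmult_le_compat => //; apply: Rmult_le_pos;
    by [apply: light_count_ge0 | apply: small_count_ge0 | apply: pow_le; lra].
rewrite -exp_plus (pow_as_exp m Rlt_0_2) (pow_as_exp W (proj1 t01)) (pow_as_exp j0 (proj1 f01)).
by rewrite -!exp_plus; apply: exp_le; lra.
Qed.

(* The constant: K = exp cK with cK = 10^12. *)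
Definition cK : R := 1000000000000.

Lemma ln_cK : 24 <= ln cK.
Proof.
rewrite -(ln_exp 24); apply: ln_le; first exact: exp_pos.
have -> : 24 = INR 24 * 1 by rewrite /=; lra.
rewrite -exp_pow_n; apply: Rle_trans (_ : 3 ^ 24 <= _).
  by apply: pow_incr; split; [left; apply: exp_pos | apply: exp_le_3].
by rewrite /cK /=; lra.
Qed.

Lemma four_le_K : 4 <= exp cK.
Proof. by have := exp_ineq1_le cK; rewrite /cK; lra. Qed.

(* The numerical heart of the sparse regime: with x = ln 2, l = ln (m/d),
   lam = ln (K n/m) and 2 l lam < m x, the thresholds W ~ (x + l) m x / (2 l lam)
   and j0 ~ (l + lam) m x / (2 l lam) fit the budget of [count_product_bound]
   for t with ln (1/t) <= lam (1 + 1/cK) and f = 1/16. *)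
Lemma sparse_budget (M x l lam W j0 ti : R) :
  / 2 <= x <= 1 -> 24 <= l -> cK <= lam -> cK <= M -> 2 * l * lam < M * x ->
  0 <= W -> W <= (x + l) * (M * x) / (2 * l * lam) + 1 ->
  0 <= j0 -> j0 <= (l + lam) * (M * x) / (2 * l * lam) + 1 ->
  0 <= ti -> ti <= lam * (1 + / cK) ->
  M / lam + M * (/ 16) + W * ti + j0 * (4 * x) <= M * x.
Proof.
rewrite /cK => x_bnd l24 lam_large M_large key W0 W_le j00 j0_le ti0 ti_le.
have l0 : 0 < l by lra.
have lam0 : 0 < lam by lra.
have lam_le : lam <= M / 48.
  have : 48 * lam <= 2 * l * lam by nra.
  by move=> *; apply: (Rmult_le_reg_l 48); [lra | rewrite /Rdiv; nra].
have M_lam : M / lam <= M / 1000000000000.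
  by apply: Rmult_le_compat_l; [lra | apply: Rinv_le_contravar; lra].
have W_ti : W * ti <= (1 + / 1000000000000) * (M * x / 2 + M / 48 + lam).
  apply: Rle_trans (_ : ((x + l) * (M * x) / (2 * l * lam) + 1) * (lam * (1 + / 1000000000000)) <= _).
    by apply: Rmult_le_compat.
  have -> : ((x + l) * (M * x) / (2 * l * lam) + 1) * (lam * (1 + / 1000000000000))
          = (1 + / 1000000000000) * (M * x / 2 + M * (x * x) / (2 * l) + lam).
    by field; lra.
  apply: Rmult_le_compat_l; first lra.
  suff : M * (x * x) / (2 * l) <= M / 48 by lra.
  apply: Rle_trans (_ : M / (2 * l) <= _).
    rewrite /Rdiv !Rmult_assoc; apply: Rmult_le_compat_l; first lra.
    have : 0 < / (2 * l) by apply: Rinv_0_lt_compat; lra.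
    have : x * x <= 1 by nra.
    by nra.
  by apply: Rmult_le_compat_l; [lra | apply: Rinv_le_contravar; lra].
have j0_x : j0 * (4 * x) <= 2 * (M / lam) + M / 12 + 4.
  apply: Rle_trans (_ : ((l + lam) * (M * x) / (2 * l * lam) + 1) * (4 * x) <= _).
    by apply: Rmult_le_compat_r; lra.
  have -> : ((l + lam) * (M * x) / (2 * l * lam) + 1) * (4 * x)
          = 2 * (x * x) * (M / lam) + 2 * (x * x) * (M / l) + 4 * x.
    by field; lra.
  have Ml : M / l <= M / 24.
    by apply: Rmult_le_compat_l; [lra | apply: Rinv_le_contravar; lra].
  have Mlam0 : 0 <= M / lam by apply: Rlt_le; apply: Rdiv_lt_0_compat; lra.
  have Ml0 : 0 <= M / l by apply: Rlt_le; apply: Rdiv_lt_0_compat; lra.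
  have xx : x * x <= 1 by nra.
  have := Rmult_le_compat_r _ _ _ Mlam0 xx; have := Rmult_le_compat_r _ _ _ Ml0 xx.
  by lra.
have : M * / 2 <= M * x by apply: Rmult_le_compat_l; lra.
by lra.
Qed.

Lemma ln_Kn_m_ge_cK m n : (1 <= m)%N -> (m <= n)%N -> cK <= ln (exp cK * INR n / INR m).
Proof.
move=> m_ge1 m_le_n.
have M1 : 1 <= INR m by apply: (le_INR 1); apply/leP.
have MN : INR m <= INR n by apply: le_INR; apply/leP.
rewrite /Rdiv Rmult_assoc ln_mult ?ln_exp; last first.
- by apply: Rmult_lt_0_compat; [lra | apply: Rinv_0_lt_compat; lra].
- exact: exp_pos.
suff : 0 <= ln (INR n * / INR m) by lra.
rewrite -ln_1; apply: ln_le; first lra.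
apply: (Rmult_le_reg_r (INR m)); first lra.
by rewrite Rmult_assoc Rinv_l; lra.
Qed.

(* Step 4 in the main regime: m >= 2 and the bias A = (1/m) log2 (m/d) lam,
   lam = ln (K n/m), is below 1/2. *)
Section SparseRegime.
Variables (m n : nat) (d eps : R).
Hypotheses (m_ge2 : (2 <= m)%N) (m_le_n : (m <= n)%N) (d01 : 0 < d < 1) (eps0 : 0 <= eps).

Let M := INR m.
Let N := INR n.
Let x := ln 2.
Let l := ln (M / d).
Let lam := ln (exp cK * N / M).
Let A := / M * log2 (M / d) * lam.
Hypothesis A_lt_half : A < / 2.

Lemma M_ge2 : 2 <= M.
Proof. by rewrite /M; apply: (le_INR 2); apply/leP. Qed.

Lemma M_le_N : M <= N.
Proof. by rewrite /M /N; apply: le_INR; apply/leP. Qed.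

Lemma x_bounds : / 2 <= x <= 1.
Proof. by have := ln_lt_2; have := ln2_lt1; rewrite /x; lra. Qed.

Lemma ln_NM_ge0 : 0 <= ln (N / M).
Proof.
have := M_ge2; have := M_le_N => MN M2.
rewrite -ln_1; apply: ln_le; first lra.
by apply: (Rmult_le_reg_r M); [lra | rewrite /Rdiv Rmult_assoc Rinv_l; lra].
Qed.

Lemma lam_eq : lam = cK + ln (N / M).
Proof.
have := M_ge2; have := M_le_N => MN M2.
rewrite /lam /Rdiv Rmult_assoc ln_mult ?ln_exp //; first exact: exp_pos.
by apply: Rmult_lt_0_compat; [lra | apply: Rinv_0_lt_compat; lra].
Qed.

Lemma lnM_lt_l : ln M < l.
Proof.
have := M_ge2 => M2; apply: ln_increasing; first lra.
by apply: (Rmult_lt_reg_r d); [lra | rewrite /Rdiv Rmult_assoc Rinv_l; nra].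
Qed.

Lemma A_eq : A = l * lam / (x * M).
Proof.
have := M_ge2; have := x_bounds => xb M2.
by rewrite /A /log2 -/l -/x; field; lra.
Qed.

Lemma sparse_key : 2 * l * lam < M * x.
Proof.
have := M_ge2; have := x_bounds; have := A_eq; have := A_lt_half => half eqA xb M2.
have xM : 0 < x * M by nra.
have : l * lam / (x * M) * (x * M) < / 2 * (x * M) by apply: Rmult_lt_compat_r; lra.
by rewrite /Rdiv Rmult_assoc Rinv_l; lra.
Qed.

(* The regime forces m >= cK, hence l >= ln m >= 24. *)
Lemma sparse_M_large : cK <= M.
Proof.
have := sparse_key; have := x_bounds; have := lam_eq; have := ln_NM_ge0.
have := lnM_lt_l; have : x <= ln M by apply: ln_le; [lra | exact: M_ge2].
move=> xlnM lnMl NM0 lamE xb key.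
have : 2 * x * cK <= 2 * l * lam by rewrite /cK in lamE *; apply: Rmult_le_compat; nra.
by rewrite /cK => bound; apply: Rlt_le; apply: (Rmult_lt_reg_l x); lra.
Qed.

Lemma sparse_l_ge24 : 24 <= l.
Proof.
have := sparse_M_large; have := lnM_lt_l; have := ln_cK => lncK lnMl MK.
have : ln cK <= ln M by apply: ln_le; [rewrite /cK; lra | lra].
by lra.
Qed.

Let s := 2 * A.
Let u := 1 - 2 * A.

Lemma s_pos : 0 < s.
Proof.
have := M_ge2; have := x_bounds; have := sparse_l_ge24; have := lam_eq; have := ln_NM_ge0.
move=> NM0 lamE l24 xb M2; rewrite /s A_eq.
apply: Rmult_lt_0_compat; first lra.
by apply: Rdiv_lt_0_compat; [apply: Rmult_lt_0_compat; rewrite ?lamE /cK; lra | nra].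
Qed.

Lemma u_bounds : 0 <= u <= 1.
Proof. by have := s_pos; have := A_lt_half; rewrite /u /s; lra. Qed.

Lemma u_le_exp : u <= exp (- s).
Proof. by have := exp_ineq1_le (- s); rewrite /u /s; lra. Qed.

Lemma sparse_small_term W j0 : ln (2 * M / d) <= INR W * s ->
  \big[Rplus/0]_(T : {ffun 'I_m -> bool} | (card_true T < j0)%N) (u ^ W) ^ card_true T
  <= 1 + d.
Proof.
move=> Ws; have u0 := proj1 u_bounds.
apply: Rle_trans (small_subsets_sum m j0 (pow_le _ W u0)) _.
exact: (small_subsets_bound (ltnW m_ge2) u0 u_le_exp d01 Ws).
Qed.

Lemma sparse_large_term j0 : ln N <= INR j0 * s ->
  \big[Rplus/0]_(T : {ffun 'I_m -> bool} | ~~ (card_true T < j0)%N) (1 + u ^ card_true T) ^ n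
  <= 2 ^ m * 3.
Proof.
move=> j0s; apply: Rle_trans (large_subsets_sum m n j0 u_bounds) _.
apply: Rmult_le_compat_l; first by apply: pow_le; lra.
have n_ge1 : (1 <= n)%N by apply: leq_trans m_le_n; apply: ltnW.
exact: (large_subsets_bound n_ge1 (proj1 u_bounds) u_le_exp j0s).
Qed.

Lemma lam_ge_cK : cK <= lam.
Proof. exact: ln_Kn_m_ge_cK (ltnW m_ge2) m_le_n. Qed.

Lemma two_M_d_eq : ln (2 * M / d) = x + l.
Proof.
have := M_ge2 => M2.
rewrite /l /x /Rdiv Rmult_assoc ln_mult //; first lra.
by apply: Rmult_lt_0_compat; [lra | apply: Rinv_0_lt_compat; lra].
Qed.

Lemma lnN_le : ln N <= l + lam.
Proof.
have := M_ge2; have := M_le_N; have := lam_eq; have := lnM_lt_l => lnMl lamE MN M2.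
have -> : ln N = ln M + ln (N / M).
  by rewrite -ln_mult; [congr ln; field | lra | apply: Rdiv_lt_0_compat]; lra.
by rewrite /cK in lamE; lra.
Qed.

Lemma s_eq : s = 2 * l * lam / (x * M).
Proof.
have := M_ge2; have := x_bounds => xb M2.
by rewrite /s A_eq; field; lra.
Qed.

(* The evaluation point for light_count: t = m / (n lam), with
   ln (1/t) = ln (n/m) + ln lam <= lam (1 + 1/cK). *)
Let t := M / (N * lam).

Lemma t_bounds : 0 < t <= 1.
Proof.
have := M_ge2; have := M_le_N; have := lam_ge_cK; rewrite /cK => lamK MN M2.
split; first by apply: Rdiv_lt_0_compat; nra.
apply: (Rmult_le_reg_r (N * lam)); first by nra.
by rewrite /t /Rdiv Rmult_assoc Rinv_l; nra.
Qed.

Lemma neg_ln_t_bounds : 0 <= - ln t <= lam * (1 + / cK).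
Proof.
have := M_ge2; have := M_le_N; have := lam_ge_cK; have := lam_eq => lamE lamK MN M2.
have cK0 : 0 < cK by rewrite /cK; lra.
have lam0 : 0 < lam by lra.
have lnt : - ln t = ln (N / M) + ln lam.
  rewrite /t /Rdiv ln_mult; [|lra|apply: Rinv_0_lt_compat; nra].
  rewrite ln_Rinv; last nra.
  rewrite ln_mult; [|lra|lra].
  by rewrite ln_mult ?ln_Rinv; [ring | lra | lra | apply: Rinv_0_lt_compat; lra].
have ln_lam : ln lam <= cK + lam / cK.
  have -> : lam = cK * (lam / cK) by field; lra.
  rewrite ln_mult; [|lra|apply: Rdiv_lt_0_compat; lra].
  have := ln_le_sub1 cK0; have := ln_le_sub1 (Rdiv_lt_0_compat _ _ lam0 cK0).
  have -> : cK * (lam / cK) / cK = lam / cK by field; lra.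
  by move=> *; lra.
have : 0 <= ln lam by rewrite -ln_1; apply: ln_le; rewrite /cK in lamK *; lra.
by rewrite lnt; split; [| have : lam / cK = lam * / cK by []]; lra.
Qed.

Lemma sparse_count_term W j0 :
  INR W <= ln (2 * M / d) / s + 1 -> INR j0 <= ln N / s + 1 ->
  light_count n W * small_count m j0 <= 2 ^ m.
Proof.
move=> W_le j0_le.
have := M_ge2; have := M_le_N; have := x_bounds; have := sparse_key => key xb MN M2.
have l24 := sparse_l_ge24; have lamK := lam_ge_cK; have MK := sparse_M_large.
have xM : 0 < x * M by nra.
have lam0 : 0 < lam by rewrite /cK in lamK; lra.
have W_le' : INR W <= (x + l) * (M * x) / (2 * l * lam) + 1.
  by apply: Rle_trans W_le _; rewrite two_M_d_eq s_eq; apply: Req_le; field; nra.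
have j0_le' : INR j0 <= (l + lam) * (M * x) / (2 * l * lam) + 1.
  apply: Rle_trans j0_le _; rewrite s_eq.
  have -> : ln N / (2 * l * lam / (x * M)) = ln N * (M * x / (2 * l * lam)) by field; nra.
  have -> : (l + lam) * (M * x) / (2 * l * lam) = (l + lam) * (M * x / (2 * l * lam))
    by field; nra.
  have : 0 <= M * x / (2 * l * lam) by apply: Rlt_le; apply: Rdiv_lt_0_compat; nra.
  by move=> ratio0; have := Rmult_le_compat_r _ _ _ ratio0 lnN_le; lra.
apply: (count_product_bound t_bounds (f := / 16)); first by split; lra.
have -> : N * t = M / lam by rewrite /t; field; split; lra.
have -> : - ln (/ 16) = 4 * x.
  rewrite ln_Rinv; last lra.
  by rewrite (_ : 16 = 2 ^ 4); [rewrite ln_pow; [rewrite /x /=; ring | lra] | rewrite /=; ring].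
rewrite -/M -/x.
exact: (sparse_budget xb l24 lamK MK key (pos_INR W) W_le' (pos_INR j0) j0_le'
          (proj1 neg_ln_t_bounds) (proj2 neg_ln_t_bounds)).
Qed.

Lemma sparse_regime :
  exists W j0, threshold_bound m n u eps W j0 <= 1 + d + exp cK * 2 ^ m * eps.
Proof.
have s0 := s_pos; have M2 := M_ge2.
have [W [W_ge W_le]] : exists W : nat, ln (2 * M / d) / s <= INR W <= ln (2 * M / d) / s + 1.
  apply: ceil_nat; rewrite two_M_d_eq; apply: Rlt_le; apply: Rdiv_lt_0_compat => //.
  by have := sparse_l_ge24; have := x_bounds; lra.
have [j0 [j0_ge j0_le]] : exists j0 : nat, ln N / s <= INR j0 <= ln N / s + 1.
  apply: ceil_nat; apply: Rmult_le_pos; last by apply: Rlt_le; apply: Rinv_0_lt_compat.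
  by rewrite -ln_1; apply: ln_le; have := M_le_N; lra.
exists W, j0.
have mult_out (a : R) : a / s <= INR W -> a <= INR W * s.
  by move=> le; have := Rmult_le_compat_r _ _ _ (Rlt_le _ _ s0) le; rewrite /Rdiv Rmult_assoc Rinv_l; lra.
have small := sparse_small_term j0 (mult_out _ W_ge).
have large : \big[Rplus/0]_(T : {ffun 'I_m -> bool} | ~~ (card_true T < j0)%N)
               (1 + u ^ card_true T) ^ n <= 2 ^ m * 3.
  apply: sparse_large_term.
  by have := Rmult_le_compat_r _ _ _ (Rlt_le _ _ s0) j0_ge; rewrite /Rdiv Rmult_assoc Rinv_l; lra.
have count := sparse_count_term W_le j0_le.
have K4 := four_le_K; have pow0 : 0 <= 2 ^ m by apply: pow_le; lra.
rewrite /threshold_bound.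
have : eps * light_count n W * small_count m j0 <= eps * 2 ^ m.
  by rewrite Rmult_assoc; apply: Rmult_le_compat_l.
have : eps * \big[Rplus/0]_(T : {ffun 'I_m -> bool} | ~~ (card_true T < j0)%N)
         (1 + u ^ card_true T) ^ n <= eps * (2 ^ m * 3) by apply: Rmult_le_compat_l.
have : 0 <= eps * 2 ^ m by apply: Rmult_le_pos.
by nra.
Qed.

End SparseRegime.

Lemma sd_from_threshold m n k (d : R) (PX : 'cV['F_2]_n -> R) (p K : R) W j0 :
  0 <= p <= / 2 -> is_distr PX -> min_entropy_ge PX (INR k) ->
  threshold_bound m n (1 - 2 * p) (/ 2 ^ k) W j0 <= 1 + d + K * 2 ^ m * / 2 ^ k ->
  stat_dist (law_M_MX (bern_mx_law m n p) PX) (law_M_U m n (bern_mx_law m n p))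
  <= / 2 * sqrt (d + K * pow 2 m / pow 2 k).
Proof.
move=> p_bnd PX_distr PX_ent bound.
apply: Rle_trans (sd_threshold_bound m W j0 p_bnd PX_distr PX_ent) _.
by apply: Rmult_le_compat_l; [lra | apply: sqrt_le_1_alt; rewrite /Rdiv; lra].
Qed.

(* Step 4 when p = 1/2, i.e. u = 0: thresholds W = j0 = 1. *)
Lemma uniform_regime m n (d eps : R) : 0 <= d -> 0 <= eps ->
  threshold_bound m n 0 eps 1 1 <= 1 + d + exp cK * 2 ^ m * eps.
Proof.
move=> d0 eps0.
have pow0 : 0 <= 2 ^ m by apply: pow_le; lra.
have count : eps * light_count n 1 * small_count m 1 <= eps * 2 ^ m.
  rewrite Rmult_assoc; apply: Rmult_le_compat_l => //.
  have := light_count_1 n; have := small_count_le m 1.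
  have := light_count_ge0 n 1; have := small_count_ge0 m 1.
  by nra.
have small := small_subsets_sum m 1 (pow_le 0 1 (Rle_refl 0)).
have large := large_subsets_sum m n 1 (conj (Rle_refl 0) Rle_0_1).
rewrite /= Rmult_0_l Rplus_0_r pow1 in small.
rewrite /= Rmult_0_l Rplus_0_r pow1 Rmult_1_r in large.
have large_eps := Rmult_le_compat_l _ _ _ eps0 large.
have := four_le_K; have : 0 <= eps * 2 ^ m by apply: Rmult_le_pos.
rewrite /threshold_bound /= Rmult_0_l.
by nra.
Qed.

(* Step 4 when m = 1 and u <= d: thresholds W = 1 and j0 = 2 > m. *)
Lemma single_row_regime n (u d eps : R) : 0 <= u <= d -> 0 <= eps ->
  threshold_bound 1 n u eps 1 2 <= 1 + d + exp cK * 2 ^ 1 * eps.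
Proof.
move=> u_bnd eps0.
have count : eps * light_count n 1 * small_count 1 2 <= eps * 2.
  rewrite Rmult_assoc; apply: Rmult_le_compat_l => //.
  have := light_count_1 n; have := small_count_le 1 2.
  have := light_count_ge0 n 1; have := small_count_ge0 1 2.
  by rewrite /=; nra.
have small := small_subsets_sum 1 2 (pow_le u 1 (proj1 u_bnd)).
have := four_le_K.
rewrite /threshold_bound large_subsets_empty //= in small *.
by nra.
Qed.

Lemma single_row_bias (d lam : R) : 0 < d < 1 -> 1 <= lam ->
  1 - 2 * (/ INR 1 * log2 (INR 1 / d) * lam) <= d.
Proof.
move=> d01 lam1; rewrite /= Rinv_1 Rmult_1_l.
have ln_inv : 1 - d <= ln (1 / d).
  by rewrite /Rdiv Rmult_1_l ln_Rinv; [have := ln_le_sub1 (proj1 d01); lra | lra].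
have ln2 := ln_lt_2; have ln2_1 := ln2_lt1.
have log_ge : ln (1 / d) <= log2 (1 / d).
  rewrite /log2; apply: (Rmult_le_reg_r (ln 2)); first lra.
  by rewrite /Rdiv Rmult_assoc Rinv_l; nra.
have : (1 - d) * 1 <= log2 (1 / d) * lam by apply: Rmult_le_compat; lra.
by lra.
Qed.

Lemma bias_term_pos m n (d : R) : (1 <= m)%N -> (m <= n)%N -> 0 < d < 1 ->
  0 < / INR m * log2 (INR m / d) * ln (exp cK * INR n / INR m).
Proof.
move=> m_ge1 m_le_n d01.
have M1 : 1 <= INR m by apply: (le_INR 1); apply/leP.
have ratio : 1 < INR m / d.
  by apply: (Rmult_lt_reg_r d); [lra | rewrite /Rdiv Rmult_assoc Rinv_l; lra].
have log_pos : 0 < log2 (INR m / d).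
  rewrite /log2; apply: Rdiv_lt_0_compat; last by have := ln_lt_2; lra.
  by rewrite -ln_1; apply: ln_increasing; lra.
apply: Rmult_lt_0_compat; first by apply: Rmult_lt_0_compat => //; apply: Rinv_0_lt_compat; lra.
by apply: Rlt_le_trans (ln_Kn_m_ge_cK m_ge1 m_le_n); rewrite /cK; lra.
Qed.

Theorem theorem1 :
  exists K : R, (0 < K) /\
  forall (n k m : nat) (delta : R),
    (1 <= m)%N -> (m <= k)%N -> (k <= n)%N ->
    (0 < delta) -> (delta < 1) ->
    forall PX : 'cV['F_2]_n -> R,
      is_distr PX -> min_entropy_ge PX (INR k) ->
      (stat_dist (law_M_MX (bern_mx_law m n (bias K n m delta)) PX)
                 (law_M_U m n (bern_mx_law m n (bias K n m delta)))
       <= / 2 * sqrt (delta + K * pow 2 m / pow 2 k)).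
Proof.
exists (exp cK); split; first exact: exp_pos.
move=> n k m d m_ge1 m_le_k k_le_n d0 d1 PX PX_distr PX_ent.
have m_le_n := leq_trans m_le_k k_le_n.
have eps0 : 0 <= / 2 ^ k by apply: Rlt_le; apply: Rinv_0_lt_compat; apply: pow_lt; lra.
have A_pos := bias_term_pos m_ge1 m_le_n (conj d0 d1).
rewrite /bias; set A := / INR m * log2 _ * _ in A_pos *.
case: (Rlt_or_le A (/ 2)) => [A_small | A_large].
- rewrite Rmin_left; last lra.
  have p_bnd : 0 <= A <= / 2 by lra.
  case: (ltnP 1 m) => [m_ge2 | m_le1].
  + have [W [j0 bound]] := sparse_regime m_ge2 m_le_n (conj d0 d1) eps0 A_small.
    exact: (sd_from_threshold p_bnd PX_distr PX_ent bound).
  + have m1 : m = 1%N by apply/eqP; rewrite eqn_leq m_le1 m_ge1.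
    have lam1 : 1 <= ln (exp cK * INR n / INR m).
      by apply: Rle_trans (ln_Kn_m_ge_cK m_ge1 m_le_n); rewrite /cK; lra.
    have u_le : 1 - 2 * A <= d by rewrite /A m1 in lam1 *; apply: single_row_bias.
    apply: (sd_from_threshold (W := 1) (j0 := 2) p_bnd PX_distr PX_ent).
    by rewrite m1; apply: single_row_regime; lra.
- rewrite Rmin_right; last lra.
  have half : 0 <= / 2 <= / 2 by lra.
  apply: (sd_from_threshold (W := 1) (j0 := 1) half PX_distr PX_ent).
  by rewrite (_ : 1 - 2 * / 2 = 0); [apply: uniform_regime; lra | field].
Qed.
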